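(* Let $u\in\mathbb R$, $\vartheta_1\in[0,\pi/2]$, $\varphi_1\in\mathbb R$, and put $x=\cos\vartheta_1\cosh(u+i\varphi_1)$. If $\lambda\in\mathbb C$ satisfies $\cosh\sqrt{\lambda+u^2}-x=0$, then $\operatorname{Re}\lambda\le0$.
   Context: $\cosh\sqrt{\zeta}$ denotes the entire function $\sum_{m\ge0}\zeta^m/(2m)!$ of $\zeta\in\mathbb C$ (independent of the choice of square root). *)

From Stdlib Require Import Reals.
From Coquelicot Require Import Coquelicot.
Open Scope R_scope.

(* Terms of the entire series  cosh sqrt(z) = sum_{m>=0} z^m / (2m)!  *)
Definition cosh_sqrt_term (z : C) (m : nat) : C :=
  Cdiv (pow_n z m) (RtoC (INR (Factorial.fact (2 * m)))).

Definition is_cosh_sqrt (z w : C) : Prop :=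
  is_series (cosh_sqrt_term z) w.

(* Complex hyperbolic cosine: cosh(a + i b) = cosh a cos b + i sinh a sin b. *)
Definition Ccosh (w : C) : C :=
  (cosh (Re w) * cos (Im w), sinh (Re w) * sin (Im w)).

(* Write lam + u^2 = s^2 with s = a + ib.  The series cosh sqrt (s^2) is the even part of
   the exponential series of s, whose real and imaginary parts are identified with
   e^a cos b and e^a sin b as the value at t = 1 of the unique solution of the rotation
   system f' = a f - b g, g' = b f + a g, f(0) = 1, g(0) = 0.  The hypothesis thus reads
   (cosh a cos b, sinh a sin b) = c (cosh u cos phi1, sinh u sin phi1) with
   c = cos theta1 in [0, 1].  The left point lies on the ellipse
   x^2 / cosh^2 a + y^2 / sinh^2 a = 1, the right one inside the confocal ellipse of
   parameter u; since these ellipses are nested increasingly in the parameter,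
   a^2 <= u^2, and Re lam = a^2 - b^2 - u^2 <= 0. *)

From Stdlib Require Import Reals Factorial Lra Lia Psatz.
From Coquelicot Require Import Coquelicot.
Open Scope R_scope.

Lemma pow_div_fact_le_exp (K : R) (n : nat) :
  0 <= K -> K ^ n / INR (fact n) <= exp K.
Proof.
  intros HK.
  assert (Hterm : forall k, 0 <= K ^ k / INR (fact k)).
  { intros k. apply Rdiv_le_0_compat; [apply pow_le, HK | apply INR_fact_lt_0]. }
  eapply Rle_trans; [|apply (exp_ge_taylor K n HK)].
  destruct n as [|n]; [simpl; lra|].
  rewrite tech5.
  pose proof (cond_pos_sum _ n Hterm). lra.
Qed.

Lemma CV_radius_factorial_bound (c : nat -> R) (K : R) :
  0 <= K -> (forall n, Rabs (c n) <= K ^ n / INR (fact n)) ->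
  CV_radius c = p_infty.
Proof.
  intros HK Hc.
  assert (Hub : forall r, 0 <= r -> Rbar_le r (CV_radius c)).
  { intros r Hr. apply (proj1 (CV_radius_bounded c)).
    exists (exp (K * r)). intros n.
    rewrite Rabs_mult, (Rabs_pos_eq (r ^ n)) by (apply pow_le, Hr).
    apply Rle_trans with (K ^ n / INR (fact n) * r ^ n).
    - apply Rmult_le_compat_r; [apply pow_le, Hr | apply Hc].
    - replace (K ^ n / INR (fact n) * r ^ n) with ((K * r) ^ n / INR (fact n))
        by (rewrite Rpow_mult_distr; unfold Rdiv; ring).
      apply pow_div_fact_le_exp. nra. }
  destruct (CV_radius c) as [l| |]; [| reflexivity |].
  - exfalso. specialize (Hub (Rabs l + 1)). simpl in Hub.
    pose proof (Rle_abs l). pose proof (Rabs_pos l). specialize (Hub ltac:(lra)). lra.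
  - exfalso. exact (Hub 0 (Rle_refl 0)).
Qed.

Lemma exp_rotation_ode_unique (a b : R) (f g : R -> R) :
  (forall t, is_derive f t (a * f t - b * g t)) ->
  (forall t, is_derive g t (b * f t + a * g t)) ->
  f 0 = 1 -> g 0 = 0 ->
  forall t, f t = exp (a * t) * cos (b * t) /\ g t = exp (a * t) * sin (b * t).
Proof.
  intros Hf Hg Hf0 Hg0 t.
  (* The squared distance to the explicit solution, damped by exp (-2at), is constant. *)
  set (N := fun t => ((f t - exp (a * t) * cos (b * t)) ^ 2
                    + (g t - exp (a * t) * sin (b * t)) ^ 2) * exp (- (2 * a * t))).
  assert (HN' : forall t, is_derive N t 0).
  { intros x. unfold N. auto_derive.
    - split; [eexists; apply Hf | split; [eexists; apply Hg | exact I]].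
    - replace (Derive (fun x => f x) x) with (a * f x - b * g x)
        by (symmetry; apply is_derive_unique, Hf).
      replace (Derive (fun x => g x) x) with (b * f x + a * g x)
        by (symmetry; apply is_derive_unique, Hg).
      ring. }
  assert (HNt : N t = N 0).
  { destruct (MVT_cor4 N (fun _ => 0) 0 (Rabs t)) with (b := t) as [c [Hc _]].
    - intros c _. apply HN'.
    - rewrite Rminus_0_r. apply Rle_refl.
    - lra. }
  assert (HN0 : N 0 = 0).
  { unfold N. rewrite Hf0, Hg0, !Rmult_0_r, Ropp_0, exp_0, cos_0, sin_0. ring. }
  rewrite HN0 in HNt. unfold N in HNt.
  apply Rmult_integral in HNt as [Hsq | Hexp];
    [| pose proof (exp_pos (- (2 * a * t))); lra].
  set (X := f t - exp (a * t) * cos (b * t)) in Hsq.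
  set (Y := g t - exp (a * t) * sin (b * t)) in Hsq.
  assert (X = 0 /\ Y = 0) as [HX HY] by (split; nra).
  unfold X, Y in *. split; lra.
Qed.

Lemma PSeries_lin_comb (c1 c2 : R) (f g : nat -> R) (x : R) :
  ex_pseries f x -> ex_pseries g x ->
  PSeries (fun n => c1 * f n + c2 * g n) x = c1 * PSeries f x + c2 * PSeries g x.
Proof.
  intros Hf Hg.
  rewrite <- (PSeries_scal c1 f), <- (PSeries_scal c2 g), <- PSeries_plus.
  - reflexivity.
  - apply ex_pseries_scal; [apply Rmult_comm | exact Hf].
  - apply ex_pseries_scal; [apply Rmult_comm | exact Hg].
Qed.

Lemma Rabs_Im_le_Cmod (z : C) : Rabs (Im z) <= Cmod z.
Proof.
  pose proof (Cmod2_alt z). pose proof (Cmod_ge_0 z).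
  apply Rabs_le. split; nra.
Qed.

Lemma Rabs_div_fact_le (x K : R) (n : nat) :
  Rabs x <= K -> Rabs (x / INR (fact n)) <= K / INR (fact n).
Proof.
  intros Hx. rewrite Rabs_div, (Rabs_pos_eq (INR _)) by
    (apply pos_INR || apply INR_fact_neq_0).
  apply Rmult_le_compat_r; [left; apply Rinv_0_lt_compat, INR_fact_lt_0 | exact Hx].
Qed.

Section ComplexExpSeries.

Variable s : C.

Definition Cexp_coef_re (n : nat) : R := Re (pow_n s n) / INR (fact n).
Definition Cexp_coef_im (n : nat) : R := Im (pow_n s n) / INR (fact n).

Lemma CV_radius_Cexp_coef_re (x : R) : Rbar_lt (Rabs x) (CV_radius Cexp_coef_re).
Proof.
  rewrite (CV_radius_factorial_bound _ (Cmod s)); [easy | apply Cmod_ge_0 |].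
  intros n. apply Rabs_div_fact_le. rewrite <- Cmod_pow. apply re_le_Cmod.
Qed.

Lemma CV_radius_Cexp_coef_im (x : R) : Rbar_lt (Rabs x) (CV_radius Cexp_coef_im).
Proof.
  rewrite (CV_radius_factorial_bound _ (Cmod s)); [easy | apply Cmod_ge_0 |].
  intros n. apply Rabs_div_fact_le. rewrite <- Cmod_pow. apply Rabs_Im_le_Cmod.
Qed.

Lemma PS_derive_Cexp_coef_re (n : nat) :
  PS_derive Cexp_coef_re n = Re s * Cexp_coef_re n - Im s * Cexp_coef_im n.
Proof.
  unfold PS_derive, Cexp_coef_re, Cexp_coef_im. change (pow_n s (S n)) with (Cmult s (pow_n s n)).
  destruct (pow_n s n) as [x y], s as [a b]. unfold Cmult; cbn [Re Im fst snd].
  rewrite fact_simpl, mult_INR.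
  field. split; [apply INR_fact_neq_0 | apply not_0_INR; lia].
Qed.

Lemma PS_derive_Cexp_coef_im (n : nat) :
  PS_derive Cexp_coef_im n = Im s * Cexp_coef_re n + Re s * Cexp_coef_im n.
Proof.
  unfold PS_derive, Cexp_coef_re, Cexp_coef_im. change (pow_n s (S n)) with (Cmult s (pow_n s n)).
  destruct (pow_n s n) as [x y], s as [a b]. unfold Cmult; cbn [Re Im fst snd].
  rewrite fact_simpl, mult_INR.
  field. split; [apply INR_fact_neq_0 | apply not_0_INR; lia].
Qed.

Lemma is_derive_PSeries_Cexp_coef_re (t : R) :
  is_derive (PSeries Cexp_coef_re) t
    (Re s * PSeries Cexp_coef_re t - Im s * PSeries Cexp_coef_im t).
Proof.
  replace (Re s * _ - _) with (PSeries (PS_derive Cexp_coef_re) t).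
  - apply is_derive_PSeries, CV_radius_Cexp_coef_re.
  - rewrite (PSeries_ext _ (fun n => Re s * Cexp_coef_re n + (- Im s) * Cexp_coef_im n)).
    + rewrite PSeries_lin_comb by
        (apply CV_radius_inside, CV_radius_Cexp_coef_re
         || apply CV_radius_inside, CV_radius_Cexp_coef_im).
      ring.
    + intros n. rewrite PS_derive_Cexp_coef_re. ring.
Qed.

Lemma is_derive_PSeries_Cexp_coef_im (t : R) :
  is_derive (PSeries Cexp_coef_im) t
    (Im s * PSeries Cexp_coef_re t + Re s * PSeries Cexp_coef_im t).
Proof.
  rewrite <- PSeries_lin_comb by
    (apply CV_radius_inside, CV_radius_Cexp_coef_re
     || apply CV_radius_inside, CV_radius_Cexp_coef_im).
  rewrite <- (PSeries_ext _ _ t PS_derive_Cexp_coef_im).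
  apply is_derive_PSeries, CV_radius_Cexp_coef_im.
Qed.

Lemma is_series_Cexp_coef_re_im :
  is_series Cexp_coef_re (exp (Re s) * cos (Im s)) /\
  is_series Cexp_coef_im (exp (Re s) * sin (Im s)).
Proof.
  assert (Hcoef0 : Cexp_coef_re 0 = 1 /\ Cexp_coef_im 0 = 0).
  { unfold Cexp_coef_re, Cexp_coef_im. simpl. split; field. }
  destruct (exp_rotation_ode_unique (Re s) (Im s) _ _
    is_derive_PSeries_Cexp_coef_re is_derive_PSeries_Cexp_coef_im)
    with (t := 1) as [Hre Him]; [rewrite PSeries_0; apply Hcoef0 .. |].
  rewrite !Rmult_1_r in Hre, Him. rewrite <- Hre, <- Him.
  split; eapply is_series_ext;
    [| apply (PSeries_correct _ 1), CV_radius_inside, CV_radius_Cexp_coef_re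
     | | apply (PSeries_correct _ 1), CV_radius_inside, CV_radius_Cexp_coef_im];
    intros n; cbv beta; rewrite pow_n_pow, pow1; apply Rmult_1_l.
Qed.

End ComplexExpSeries.

Lemma is_series_even_part (f : nat -> R) (l1 l2 : R) :
  is_series f l1 -> is_series (fun n => (-1) ^ n * f n) l2 ->
  is_series (fun m => f (2 * m)%nat) ((l1 + l2) / 2).
Proof.
  intros H1 H2.
  (* [g] agrees with [f] at even indices and vanishes at odd ones. *)
  set (g := fun n => / 2 * (f n + (-1) ^ n * f n)).
  assert (Hg : is_series g ((l1 + l2) / 2)).
  { replace ((l1 + l2) / 2) with (scal (/ 2) (plus l1 l2))
      by (unfold scal, plus; simpl; unfold mult; simpl; field).
    exact (is_series_scal (/ 2) _ _ (is_series_plus _ _ _ _ H1 H2)). }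
  assert (Hsum : forall m, sum_n (fun m => f (2 * m)%nat) m = sum_n g (2 * m + 1)).
  { assert (Heven : forall k, g (2 * k)%nat = f (2 * k)%nat)
      by (intros k; unfold g; rewrite pow_1_even; field).
    assert (Hodd : forall k, g (S (2 * k)) = 0)
      by (intros k; unfold g; rewrite pow_1_odd; field).
    induction m as [|m IH].
    - change (2 * 0 + 1)%nat with 1%nat.
      rewrite sum_Sn, !sum_O.
      pose proof (Heven 0%nat). pose proof (Hodd 0%nat). simpl in *.
      unfold plus; simpl. lra.
    - replace (2 * S m + 1)%nat with (S (S (2 * m + 1))) by lia.
      rewrite !sum_Sn, IH.
      replace (S (2 * m + 1)) with (2 * S m)%nat by lia.
      rewrite Heven, Hodd. unfold plus; simpl; ring. }
  change (is_lim_seq (sum_n (fun m => f (2 * m)%nat)) ((l1 + l2) / 2)).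
  apply (is_lim_seq_ext (fun m => sum_n g (2 * m + 1))); [intros m; symmetry; apply Hsum|].
  apply (is_lim_seq_subseq (sum_n g)); [| exact Hg].
  apply eventually_subseq. intros n. lia.
Qed.

Lemma pow_n_Copp (s : C) (n : nat) :
  pow_n (Copp s) n = ((-1) ^ n * Re (pow_n s n), (-1) ^ n * Im (pow_n s n)).
Proof.
  induction n as [|n IH]; [cbn [pow_n pow]; unfold one; simpl; unfold RtoC; f_equal; ring|].
  change (pow_n (Copp s) (S n)) with (Cmult (Copp s) (pow_n (Copp s) n)).
  change (pow_n s (S n)) with (Cmult s (pow_n s n)).
  rewrite IH. destruct (pow_n s n) as [x y], s as [a b].
  unfold Cmult, Copp; cbn [Re Im fst snd pow]. f_equal; ring.
Qed.

Lemma Cexp_coef_re_Copp (s : C) (n : nat) :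
  Cexp_coef_re (Copp s) n = (-1) ^ n * Cexp_coef_re s n.
Proof. unfold Cexp_coef_re. rewrite pow_n_Copp. cbn [Re fst]. unfold Rdiv. ring. Qed.

Lemma Cexp_coef_im_Copp (s : C) (n : nat) :
  Cexp_coef_im (Copp s) n = (-1) ^ n * Cexp_coef_im s n.
Proof. unfold Cexp_coef_im. rewrite pow_n_Copp. cbn [Im snd]. unfold Rdiv. ring. Qed.

Lemma pow_n_Cmult_sqr (s : C) (m : nat) : pow_n (Cmult s s) m = pow_n s (2 * m).
Proof.
  replace (2 * m)%nat with (m + m)%nat by lia.
  induction m as [|m IH]; [reflexivity|].
  replace (S m + S m)%nat with (S (S (m + m))) by lia.
  change (pow_n (Cmult s s) (S m)) with (Cmult (Cmult s s) (pow_n (Cmult s s) m)).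
  change (pow_n s (S (S (m + m)))) with (Cmult s (Cmult s (pow_n s (m + m)))).
  rewrite IH, Cmult_assoc. reflexivity.
Qed.

Lemma cosh_sqrt_term_sqr (s : C) (m : nat) :
  cosh_sqrt_term (Cmult s s) m = (Cexp_coef_re s (2 * m), Cexp_coef_im s (2 * m)).
Proof.
  unfold cosh_sqrt_term, Cexp_coef_re, Cexp_coef_im. rewrite pow_n_Cmult_sqr.
  destruct (pow_n s (2 * m)) as [x y].
  pose proof (INR_fact_neq_0 (2 * m)).
  unfold Cdiv, Cinv, Cmult, RtoC; cbn [Re Im fst snd]. f_equal; field; auto.
Qed.

Lemma is_series_cosh_sqrt_sqr (s : C) :
  is_series (fun m => Re (cosh_sqrt_term (Cmult s s) m)) (Re (Ccosh s)) /\
  is_series (fun m => Im (cosh_sqrt_term (Cmult s s) m)) (Im (Ccosh s)).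
Proof.
  destruct (is_series_Cexp_coef_re_im s) as [Hre Him].
  destruct (is_series_Cexp_coef_re_im (Copp s)) as [Hre' Him'].
  apply (is_series_ext _ _ _ (Cexp_coef_re_Copp s)) in Hre'.
  apply (is_series_ext _ _ _ (Cexp_coef_im_Copp s)) in Him'.
  destruct s as [a b]. cbn [Ccosh Re Im Copp fst snd] in *.
  rewrite cos_neg in Hre'. rewrite sin_neg in Him'.
  replace (cosh a * cos b) with ((exp a * cos b + exp (- a) * cos b) / 2)
    by (unfold cosh; field).
  replace (sinh a * sin b) with ((exp a * sin b + exp (- a) * - sin b) / 2)
    by (unfold sinh; field).
  split; eapply is_series_ext;
    [| apply (is_series_even_part _ _ _ Hre Hre')
     | | apply (is_series_even_part _ _ _ Him Him')];
    intros m; rewrite cosh_sqrt_term_sqr; reflexivity.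
Qed.

Lemma sum_n_C (f : nat -> C) (n : nat) :
  sum_n f n = (sum_n (fun k => Re (f k)) n, sum_n (fun k => Im (f k)) n).
Proof.
  induction n as [|n IH].
  - rewrite !sum_O. apply surjective_pairing.
  - rewrite !sum_Sn, IH. reflexivity.
Qed.

Lemma is_series_Re_Im (f : nat -> C) (l : C) :
  is_series f l ->
  is_series (fun n => Re (f n)) (Re l) /\ is_series (fun n => Im (f n)) (Im l).
Proof.
  intros H. destruct l as [x y].
  split; eapply filterlim_ext.
  - intros n. exact (f_equal fst (sum_n_C f n)).
  - exact (filterlim_comp _ _ _ _ _ _ _ _ H (continuous_fst x y)).
  - intros n. exact (f_equal snd (sum_n_C f n)).
  - exact (filterlim_comp _ _ _ _ _ _ _ _ H (continuous_snd x y)).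
Qed.

Lemma is_cosh_sqrt_sqr_unique (s w : C) : is_cosh_sqrt (Cmult s s) w -> w = Ccosh s.
Proof.
  intros H. destruct (is_series_Re_Im _ _ H) as [Hre Him].
  destruct (is_series_cosh_sqrt_sqr s) as [Hre' Him'].
  apply injective_projections.
  - exact (eq_trans (eq_sym (is_series_unique _ _ Hre)) (is_series_unique _ _ Hre')).
  - exact (eq_trans (eq_sym (is_series_unique _ _ Him)) (is_series_unique _ _ Him')).
Qed.

Lemma C_sqr_root_exists (z : C) : exists s : C, z = Cmult s s.
Proof.
  destruct z as [p q].
  set (m := Cmod (p, q)).
  assert (Hm : m ^ 2 = p ^ 2 + q ^ 2) by apply Cmod2_alt.
  assert (Hm0 : 0 <= m) by apply Cmod_ge_0.
  assert (Hmp : - m <= p <= m) by (split; nra).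
  set (a := sqrt ((m + p) / 2)). set (b := sqrt ((m - p) / 2)).
  assert (Ha : a * a = (m + p) / 2) by (apply sqrt_sqrt; lra).
  assert (Hb : b * b = (m - p) / 2) by (apply sqrt_sqrt; lra).
  assert (Hab : 0 <= a * b) by (apply Rmult_le_pos; apply sqrt_pos).
  assert (Hab2 : (2 * a * b) ^ 2 = q ^ 2) by nra.
  destruct (Rle_dec 0 q) as [Hq | Hq].
  - exists (a, b). unfold Cmult; cbn [Re Im fst snd]. f_equal; nra.
  - exists (a, - b). unfold Cmult; cbn [Re Im fst snd]. f_equal; nra.
Qed.

Lemma cosh_sqr (x : R) : cosh x ^ 2 = 1 + sinh x ^ 2.
Proof.
  unfold cosh, sinh. pose proof (exp_plus x (- x)) as H.
  rewrite Rplus_opp_r, exp_0 in H. nra.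
Qed.

Lemma sinh_sqr_lt (u a : R) : u ^ 2 < a ^ 2 -> sinh u ^ 2 < sinh a ^ 2.
Proof.
  intros Hua.
  assert (Habs : Rabs u < Rabs a) by (apply Rsqr_lt_abs_0; unfold Rsqr; nra).
  assert (Hodd : forall x, sinh x ^ 2 = sinh (Rabs x) ^ 2).
  { intros x. destruct (Rle_dec 0 x).
    - rewrite Rabs_pos_eq by lra. reflexivity.
    - rewrite Rabs_left by lra. unfold sinh. rewrite Ropp_involutive. field. }
  rewrite (Hodd u), (Hodd a).
  assert (0 <= sinh (Rabs u)).
  { rewrite <- sinh_0. destruct (Rabs_pos u) as [Hu | Hu]; [left; apply sinh_lt, Hu | rewrite <- Hu; lra]. }
  pose proof (sinh_lt _ _ Habs). nra.
Qed.

(* For A = cosh^2 a, P = cosh^2 u, X = cos^2 b, Y = cos^2 phi with u^2 < a^2: the point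
   (cosh a cos b, sinh a sin b) of the ellipse of parameter a is not inside or on the
   ellipse of parameter u. *)
Lemma confocal_ellipses_nested (A P X Y : R) :
  1 <= P -> P < A -> 0 <= Y <= 1 ->
  A * X <= P * Y -> (A - 1) * (1 - X) <= (P - 1) * (1 - Y) -> False.
Proof. intros. nra. Qed.

Lemma Re_sqr_le_of_Ccosh_scaled (s w : C) (c : R) :
  0 <= c <= 1 -> Ccosh s = Cmult (RtoC c) (Ccosh w) -> Re s ^ 2 <= Re w ^ 2.
Proof.
  intros Hc Hs. destruct s as [a b], w as [u ph].
  unfold Ccosh, Cmult, RtoC in Hs; cbn [Re Im fst snd] in *.
  injection Hs as Hcos Hsin.
  rewrite Rmult_0_l, Rminus_0_r in Hcos. rewrite Rmult_0_l, Rplus_0_r in Hsin.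
  assert (Hcontract : forall x, (c * x) ^ 2 <= x ^ 2).
  { intros x. rewrite Rpow_mult_distr.
    assert (c ^ 2 <= 1) by nra. pose proof (pow2_ge_0 x). nra. }
  destruct (Rle_lt_dec (a ^ 2) (u ^ 2)) as [| Hua]; [assumption | exfalso].
  apply (confocal_ellipses_nested (cosh a ^ 2) (cosh u ^ 2) (cos b ^ 2) (cos ph ^ 2)).
  - rewrite cosh_sqr. pose proof (pow2_ge_0 (sinh u)). lra.
  - rewrite !cosh_sqr. pose proof (sinh_sqr_lt _ _ Hua). lra.
  - pose proof (sin2_cos2 ph). unfold Rsqr in *. split; nra.
  - replace (cosh a ^ 2 * cos b ^ 2) with ((cosh a * cos b) ^ 2) by ring.
    rewrite Hcos, <- Rpow_mult_distr. apply Hcontract.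
  - rewrite !cosh_sqr.
    replace (1 - cos b ^ 2) with (sin b ^ 2) by (pose proof (sin2_cos2 b); unfold Rsqr in *; nra).
    replace (1 - cos ph ^ 2) with (sin ph ^ 2) by (pose proof (sin2_cos2 ph); unfold Rsqr in *; nra).
    replace (1 + sinh a ^ 2 - 1) with (sinh a ^ 2) by ring.
    replace (1 + sinh u ^ 2 - 1) with (sinh u ^ 2) by ring.
    replace (sinh a ^ 2 * sin b ^ 2) with ((sinh a * sin b) ^ 2) by ring.
    rewrite Hsin, <- Rpow_mult_distr. apply Hcontract.
Qed.

Theorem lemma4p44 (u theta1 phi1 : R) (lam : C) :
  0 <= theta1 <= PI / 2 ->
  is_cosh_sqrt (Cplus lam (RtoC (u ^ 2)))
    (Cmult (RtoC (cos theta1)) (Ccosh (u, phi1))) ->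
  Re lam <= 0.
Proof.
  intros Htheta H.
  destruct (C_sqr_root_exists (Cplus lam (RtoC (u ^ 2)))) as [s Hs].
  rewrite Hs in H. apply is_cosh_sqrt_sqr_unique in H.
  assert (Hc : 0 <= cos theta1 <= 1).
  { split; [apply cos_ge_0; pose proof PI_RGT_0; lra | apply COS_bound]. }
  pose proof (Re_sqr_le_of_Ccosh_scaled _ _ _ Hc (eq_sym H)) as Hle.
  apply (f_equal Re) in Hs.
  destruct lam as [l1 l2], s as [a b].
  unfold Cplus, Cmult, RtoC in Hs; cbn [Re Im fst snd] in *.
  nra.
Qed.
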